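(* For every positive integer $n$, $\mathrm{Sort}_n(\mathrm{SC}_{\underline{23}1})=\mathrm{Av}_n(1324,\mu_{2413})$, the set of permutations in $\mathfrak S_n$ that avoid the classical pattern $1324$ and the mesh pattern $\mu_{2413}=(2413,\{(1,0),(2,1),(2,2)\})$.
   Context: $\mathfrak S_n$ is the set of permutations of $\{1,\dots,n\}$. A vincular pattern is a permutation with some entries underlined; a sequence contains it if it has a subsequence with the same relative order in which entries corresponding to adjacent underlined entries occupy consecutive positions. An occurrence of $\underline{23}1$ is $a_j a_{j+1} a_l$ with $l>j+1$ and $a_l<a_j<a_{j+1}$. A mesh pattern is a pair $(\sigma,A)$ with $\sigma\in\mathfrak S_k$ and $A\subseteq\{0,\dots,k\}^2$. A permutation $\tau\in\mathfrak S_n$ contains $(\sigma,A)$ if there are positions $i_1<\dots<i_k$ with $\tau_{i_1}\cdots\tau_{i_k}$ order-isomorphic to $\sigma$ such that, writing $i_0=0$, $i_{k+1}=n+1$, and $v_0=0<v_1<\dots<v_k<v_{k+1}=n+1$ for the sorted values $\{\tau_{i_1},\dots,\tau_{i_k}\}$ together with $0,n+1$, no point $(j,\tau_j)$ lies in the open box $i_a<j<i_{a+1}$, $v_b<\tau_j<v_{b+1}$ for any $(a,b)\in A$. Otherwise $\tau$ avoids it. For a pattern $\sigma$, the map $\mathrm{SC}_\sigma$ acts on $\tau$: read entries left to right; when the next entry $x$ is read, if pushing $x$ yields a stack whose entries read top to bottom (stack adjacency = consecutive positions) avoid $\sigma$, push $x$; otherwise pop the top stack entry to the output and repeat. At the end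 pop all remaining entries; the output is $\mathrm{SC}_\sigma(\tau)$. West's stack-sorting map is $s=\mathrm{SC}_{21}$. $\mathrm{Sort}_n(\mathrm{SC}_\sigma)=\{\tau\in\mathfrak S_n : s(\mathrm{SC}_\sigma(\tau))=12\cdots n\}$. *)

From mathcomp Require Import all_boot.
Set Implicit Arguments. Unset Strict Implicit. Unset Printing Implicit Defensive.

Definition is_perm (n : nat) (t : seq nat) : bool := perm_eq t (iota 1 n).

Definition order_iso (u p : seq nat) : bool :=
  (size u == size p) &&
  all (fun i => all (fun j =>
      (nth 0 u i < nth 0 u j) == (nth 0 p i < nth 0 p j))
    (iota 0 (size p))) (iota 0 (size p)).

Definition contains_cl (p t : seq nat) : bool :=
  [exists m : (size t).-tuple bool, order_iso (mask m t) p].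

(* vincular pattern \underline{23}1: positions j, j+1, l with l > j+1 and
   a_l < a_j < a_{j+1} (positions 0-indexed here) *)
Definition contains_23_1 (t : seq nat) : bool :=
  has (fun j => has (fun l =>
      (j.+1 < l) && (nth 0 t l < nth 0 t j) && (nth 0 t j < nth 0 t j.+1))
    (iota 0 (size t))) (iota 0 (size t)).

(* One step of the pattern-avoiding stack: insert x into the stack stk (top at
   head), popping entries to the output while pushing x would produce a stack
   (read top to bottom) that fails [avoid]. *)
Fixpoint sc_insert (avoid : seq nat -> bool) (x : nat) (stk out : seq nat)
  : seq nat * seq nat :=
  match stk with
  | [::] => ([:: x], out)
  | y :: stk' =>
      if avoid (x :: stk) then (x :: stk, out)
      else sc_insert avoid x stk' (rcons out y)
  end.

Fixpoint sc_loop (avoid : seq nat -> bool) (t stk out : seq nat) : seq nat :=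
  match t with
  | [::] => out ++ stk
  | x :: t' =>
      let p := sc_insert avoid x stk out in sc_loop avoid t' p.1 p.2
  end.

Definition SC (avoid : seq nat -> bool) (t : seq nat) : seq nat :=
  sc_loop avoid t [::] [::].

Definition SC_23_1 : seq nat -> seq nat := SC (fun s => ~~ contains_23_1 s).

Definition west_s : seq nat -> seq nat := SC (fun s => ~~ contains_cl [:: 2; 1] s).

(* Mesh pattern containment (sigma, A); positions and values are 1-indexed,
   with i_0 = 0, i_{k+1} = n+1, v_0 = 0, v_{k+1} = n+1. *)
Definition contains_mesh (sigma : seq nat) (A : seq (nat * nat)) (t : seq nat)
  : bool :=
  let n := size t in
  [exists m : n.-tuple bool,
    order_iso (mask m t) sigma &&
    let pos := 0 :: [seq i.+1 | i <- iota 0 n & nth false m i] ++ [:: n.+1] in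
    let vals := 0 :: sort leq (mask m t) ++ [:: n.+1] in
    all (fun ab =>
      all (fun j =>
        ~~ [&& nth 0 pos ab.1 < j, j < nth 0 pos ab.1.+1,
               nth 0 vals ab.2 < nth 0 t j.-1 & nth 0 t j.-1 < nth 0 vals ab.2.+1])
      (iota 1 n)) A].

Definition mu2413 : seq nat * seq (nat * nat) :=
  ([:: 2; 4; 1; 3], [:: (1, 0); (2, 1); (2, 2)]).

From mathcomp Require Import all_boot zify.
From Stdlib Require Import Classical_Prop.
Set Implicit Arguments. Unset Strict Implicit. Unset Printing Implicit Defensive.

(* By Knuth's theorem, West's map sorts w exactly when w avoids 231, so one has to show that
   SC_23_1(t) contains 231 iff t contains 1324 or mu.  Reading t from the left, the stack of
   SC_23_1 holds, from the top, the right-to-left minima of the prefix read so far, then the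
   minimum of that prefix, then older entries; an entry has been output exactly when the first
   smaller entry after it is not a left-to-right minimum.  When a letter x is read, the new
   occurrences of 231 in output ++ stack are those through x, and they correspond to the
   occurrences of 1324 or mu whose last letter is x. *)

(* In nat_scope, so that it takes precedence over the pi-part notation of prime.v. *)
Local Notation "s `_ i" := (nth 0 s i) : nat_scope.

Section Sequences.

Variable T : eqType.

Lemma pairwise_insert (r : rel T) (A B : seq T) x :
  pairwise r (A ++ x :: B) =
  [&& pairwise r (A ++ B), all (fun a => r a x) A & all (r x) B].
Proof.
rewrite !pairwise_cat pairwise_cons allrel_consr.
by case: (allrel r A B); case: (pairwise r A); case: (pairwise r B);
  case: (all _ A); case: (all _ B).
Qed.

Lemma all_take_find (a : pred T) (s : seq T) : all (fun y => ~~ a y) (take (find a s) s).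
Proof. by elim: s => [|y s IH] //=; case: ifP => //= ->. Qed.

Lemma all_drop_find (r : rel T) (a : pred T) (s : seq T) :
  (forall y z, a y -> r y z -> a z) -> pairwise r s -> all a (drop (find a s) s).
Proof.
move=> a_up; elim: s => [|y s IH] //= /andP [/allP r_y r_s].
case: ifP => [a_y | _]; last exact: IH.
by rewrite /= a_y; apply/allP => z /r_y; apply: a_up.
Qed.

Lemma perm_pop_push (u out stk : seq T) x k : perm_eq (out ++ stk) u ->
  perm_eq ((out ++ take k stk) ++ x :: drop k stk) (rcons u x).
Proof.
move=> /permP perm_u; apply/permP => P; move: (perm_u P).
rewrite -[in count _ (out ++ stk)](cat_take_drop k stk) -cats1 !count_cat /=; lia.
Qed.

Lemma index_rcons (u : seq T) x y : y \in u -> index y (rcons u x) = index y u.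
Proof. by move=> y_u; rewrite -cats1 index_cat y_u. Qed.

Lemma index_rcons_last (u : seq T) x : x \notin u -> index x (rcons u x) = size u.
Proof. by move=> x_u; rewrite -cats1 index_cat (negbTE x_u) /= eqxx addn0. Qed.

Lemma drop_cat_le k (P s : seq T) : k <= size P -> drop k (P ++ s) = drop k P ++ s.
Proof.
rewrite drop_cat leq_eqVlt => /orP [/eqP -> | ->] //.
by rewrite ltnn subnn drop0 drop_size.
Qed.

Lemma find_cat_hit (a : pred T) (P rest : seq T) l :
  a l -> find a (P ++ l :: rest) = find a P.
Proof. by move=> a_l; rewrite find_cat /= a_l addn0; case: ifP => // /negbT/hasNfind. Qed.

Lemma index_drop_ltn (s : seq T) k a b : uniq s -> a \in drop k s -> b \in drop k s ->
  (index a (drop k s) < index b (drop k s)) = (index a s < index b s).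
Proof.
move=> s_uniq a_drop b_drop.
have notin_take y : y \in drop k s -> y \notin take k s.
  move=> y_drop; have := s_uniq; rewrite -{1}(cat_take_drop k s) cat_uniq.
  by case/and3P => _ /hasPn /(_ y y_drop).
by rewrite -{3 4}(cat_take_drop k s) !index_cat (negbTE (notin_take a a_drop))
  (negbTE (notin_take b b_drop)) ltn_add2l.
Qed.

End Sequences.

Lemma mask_iota_nth (t : seq nat) m :
  mask m t = map (nth 0 t) (mask m (iota 0 (size t))).
Proof. by rewrite map_mask -/(mkseq _ _) mkseq_nth. Qed.

Lemma subseq_iotaE (I : seq nat) n :
  subseq I (iota 0 n) = sorted ltn I && all (fun i => i < n) I.
Proof.
apply/idP/andP => [sub_I|[lt_I /allP I_lt]].
  split; first exact: (subseq_sorted ltn_trans) sub_I (iota_ltn_sorted 0 n).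
  by apply/allP => i /(mem_subseq sub_I); rewrite mem_iota.
apply/subseq_uniqP; first exact: iota_uniq.
apply: (irr_sorted_eq ltn_trans ltnn) => //.
  exact: (sorted_filter ltn_trans) (iota_ltn_sorted 0 n).
move=> i; rewrite mem_filter mem_iota /=.
by case: (boolP (i \in I)) => // /I_lt ->.
Qed.

Lemma filter_iota_nth (m : seq bool) :
  [seq i <- iota 0 (size m) | nth false m i] = mask m (iota 0 (size m)).
Proof. by rewrite filter_mask -/(mkseq _ _) mkseq_nth. Qed.

Lemma nth_rcons_lt (u : seq nat) x i : i < size u -> (rcons u x)`_i = u`_i.
Proof. by move=> i_lt; rewrite nth_rcons i_lt. Qed.

Lemma nth_rcons_size (u : seq nat) x : (rcons u x)`_(size u) = x.
Proof. by rewrite nth_rcons ltnn eqxx. Qed.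

Lemma nth_ltn_uniq (u : seq nat) i j : uniq u -> i < size u -> j < size u -> i != j ->
  ~~ (u`_j < u`_i) -> u`_i < u`_j.
Proof.
move=> u_uniq i_lt j_lt ij; rewrite -leqNgt leq_eqVlt => /orP [/eqP ji | //].
by move: ij; rewrite -(nth_uniq 0 i_lt j_lt u_uniq) ji eqxx.
Qed.

Lemma contains_clP (p t : seq nat) :
  reflect (exists2 I, subseq I (iota 0 (size t)) & order_iso (map (nth 0 t) I) p)
          (contains_cl p t).
Proof.
apply: (iffP existsP) => [[m]|[I /subseqP [m size_m ->] iso_I]].
  by rewrite mask_iota_nth; exists (mask m (iota 0 (size t))); rewrite ?mask_subseq.
have size_m' : size m == size t by rewrite size_m size_iota.
by exists (Tuple size_m'); rewrite mask_iota_nth.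
Qed.

Ltac decide_ltn := repeat match goal with
  | |- context [?a < ?b] =>
     first [ have -> : (a < b) = true by lia | have -> : (a < b) = false by lia ]
  end.

Lemma order_iso21 a b : order_iso [:: a; b] [:: 2; 1] = (b < a).
Proof. by rewrite /order_iso /= !ltnn /=; case: ltngtP. Qed.

Lemma order_iso1324 a b c d :
  order_iso [:: a; b; c; d] [:: 1; 3; 2; 4] = [&& a < c, c < b & b < d].
Proof.
rewrite /order_iso /= !ltnn /=; apply/idP/idP => [|/and3P [*]]; last by decide_ltn.
by move=> H; repeat (move/andP: H => [/eqP ? H]); lia.
Qed.

Lemma order_iso2413 a b c d :
  order_iso [:: a; b; c; d] [:: 2; 4; 1; 3] = [&& c < a, a < d & d < b].
Proof.
rewrite /order_iso /= !ltnn /=; apply/idP/idP => [|/and3P [*]]; last by decide_ltn.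
by move=> H; repeat (move/andP: H => [/eqP ? H]); lia.
Qed.

Lemma avoid21E (s : seq nat) : ~~ contains_cl [:: 2; 1] s = pairwise leq s.
Proof.
apply/idP/(pairwiseP 0) => [avoid_s i j i_lt j_lt ij | sorted_s].
  rewrite leqNgt; apply: contra avoid_s => ji; apply/contains_clP.
  exists [:: i; j]; rewrite ?subseq_iotaE /= ?order_iso21 //.
  by move: i_lt j_lt; rewrite !inE; lia.
apply/contains_clP => -[[|i [|j [|? ?]]]] //.
rewrite subseq_iotaE /= order_iso21 => ij_lt.
by rewrite ltnNge sorted_s ?inE //; lia.
Qed.

Lemma contains_23_1P (s : seq nat) :
  reflect (exists j l, [/\ j.+1 < l, l < size s & s`_l < s`_j < s`_j.+1])
          (contains_23_1 s).
Proof.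
apply: (iffP hasP) => [[j _ /hasP [l]]|[j [l [jl l_lt vals]]]].
  by rewrite mem_iota => /andP [_ l_lt] /andP [/andP [jl ?] ?]; exists j, l; split => //; lia.
exists j; first by rewrite mem_iota; lia.
by apply/hasP; exists l; rewrite ?mem_iota; lia.
Qed.

Lemma contains_23_1_cons x (s : seq nat) :
  contains_23_1 (x :: s) =
  contains_23_1 s || (x < head 0 s) && has (fun y => y < x) (behead s).
Proof.
apply/contains_23_1P/idP => [[[|j] [l [jl l_lt vals]]]|].
- case: l jl l_lt vals => [|[|l]] //; case: s => [|y s] //= _ l_lt /andP [l_x ->] /=.
  by apply/orP; right; apply/hasP; exists s`_l; rewrite // mem_nth // -ltnS.
- by apply/orP; left; apply/contains_23_1P; exists j, l.-1; case: l jl l_lt vals.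
- case/orP => [/contains_23_1P [j [l [jl l_lt vals]]]|].
    by exists j.+1, l.+1.
  case: s => [|y s] //= /andP [x_y /hasP [z z_s z_x]].
  by exists 0, (index z s).+2; rewrite /= !ltnS index_mem nth_index // z_x.
Qed.

Lemma contains_23_1_drop k (s : seq nat) : ~~ contains_23_1 s -> ~~ contains_23_1 (drop k s).
Proof.
elim: s k => [|y s IH] [|k] //= s_avoid; apply: IH.
by move: s_avoid; rewrite contains_23_1_cons negb_or => /andP [].
Qed.

Definition has1324 (u : seq nat) := exists i j k l,
  [/\ i < j < k, k < l < size u & [&& u`_i < u`_k, u`_k < u`_j & u`_j < u`_l]].

Lemma contains1324P (t : seq nat) : reflect (has1324 t) (contains_cl [:: 1; 3; 2; 4] t).
Proof.
apply: (iffP (contains_clP _ _)) => [[[|i [|j [|k [|l [|? ?]]]]]] //|].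
  by rewrite subseq_iotaE /= order_iso1324 => *; exists i, j, k, l; split; lia.
move=> [i [j [k [l [ijk kl vals]]]]]; exists [:: i; j; k; l].
  by rewrite subseq_iotaE /=; lia.
by rewrite /= order_iso1324.
Qed.

(* The value v of the last letter is a parameter, so that occurrences completed by a letter not
   yet read can be described; the shaded boxes (2,1) and (2,2) merge into one because the entries
   are distinct (see mu_boxesE). *)
Definition mu_occ (u : seq nat) (v i j k : nat) :=
  [/\ u`_k < u`_i < v, v < u`_j,
      forall r, i < r < j -> u`_k <= u`_r &
      forall r, j < r < k -> ~~ (u`_k < u`_r < v)].

Definition has_mu (u : seq nat) := exists i j k l,
  [/\ i < j < k, k < l < size u & mu_occ u u`_l i j k].

Lemma sort2413 a b c d : c < a -> a < d -> d < b ->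
  sort leq [:: a; b; c; d] = [:: c; a; d; b].
Proof.
move=> ca ad db; apply: (sorted_eq leq_trans anti_leq).
- exact: (sort_sorted leq_total).
- by rewrite /=; lia.
- by rewrite perm_sort; apply/permP => P /=; lia.
Qed.

(* Positions in contains_mesh are 1-based. *)
Lemma box_freeP (t : seq nat) a b lo hi :
  reflect (forall r, a < r < b -> r < size t -> ~~ (lo < t`_r < hi))
    (all (fun J => ~~ [&& a.+1 < J, J < b.+1, lo < t`_J.-1 & t`_J.-1 < hi])
         (iota 1 (size t))).
Proof.
apply: (iffP allP) => [free r r_ab r_lt | free [|J]]; last 2 first.
- by rewrite mem_iota.
- by rewrite mem_iota /= => J_lt; have := free J; lia.
by have := free r.+1; rewrite mem_iota /=; lia.
Qed.

Lemma mu_boxesE (t : seq nat) i j k v :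
  uniq t -> 0 \notin t -> i < j < k -> k < size t -> t`_k < t`_i < v ->
  [/\ forall r, i < r < j -> r < size t -> ~~ (0 < t`_r < t`_k),
      forall r, j < r < k -> r < size t -> ~~ (t`_k < t`_r < t`_i) &
      forall r, j < r < k -> r < size t -> ~~ (t`_i < t`_r < v)] <->
  (forall r, i < r < j -> t`_k <= t`_r) /\
  (forall r, j < r < k -> ~~ (t`_k < t`_r < v)).
Proof.
move=> t_uniq t_pos ijk k_lt kiv.
have t_gt0 r : r < size t -> 0 < t`_r.
  by move=> r_lt; rewrite lt0n; apply: contraNneq t_pos => <-; exact: mem_nth.
have t_neq_i r : j < r -> r < size t -> t`_r != t`_i.
  by move=> jr r_lt; rewrite nth_uniq ?neq_ltn //; [lia | apply: ltn_trans k_lt; lia].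
split=> [[box10 box21 box22] | [box1 box2]]; split=> r r_in.
- have r_lt : r < size t by lia.
  by have := t_gt0 r r_lt; have := box10 r r_in r_lt; lia.
- have r_lt : r < size t by lia.
  have := box21 r r_in r_lt; have := box22 r r_in r_lt; have := t_neq_i r.
  case: ltngtP => //; lia.
- by move=> _; have := box1 r r_in; lia.
- by move=> _; have := box2 r r_in; lia.
- by move=> r_lt; have := box2 r r_in; lia.
Qed.

Lemma contains_muP (t : seq nat) : uniq t -> 0 \notin t ->
  reflect (has_mu t) (contains_mesh mu2413.1 mu2413.2 t).
Proof.
move=> t_uniq t_pos.
apply: (iffP existsP) => [[m]|[i [j [k [l [ijk kl [kil lj box1 box2]]]]]]].
  rewrite mask_iota_nth; have := filter_iota_nth m; rewrite size_tuple => ->.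
  have : subseq (mask m (iota 0 (size t))) (iota 0 (size t)) by exact: mask_subseq.
  case: (mask m _) => [|i [|j [|k [|l [|? ?]]]]] // sub /andP [iso].
  move: sub iso; rewrite subseq_iotaE /= order_iso2413 => ijkl vals.
  rewrite sort2413 /=; try lia.
  move=> /and4P [/box_freeP box10 /box_freeP box21 /box_freeP box22 _].
  have ijk : i < j < k by lia.
  have k_lt : k < size t by lia.
  have kil : t`_k < t`_i < t`_l by lia.
  have [box1 box2] := (mu_boxesE t_uniq t_pos ijk k_lt kil).1 (And3 box10 box21 box22).
  by exists i, j, k, l; split; try split; try lia.
have : subseq [:: i; j; k; l] (iota 0 (size t)) by rewrite subseq_iotaE /=; lia.
case/subseqP => m size_m I_eq.
have size_m' : size m == size t by rewrite size_m size_iota.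
have filter_m : [seq r <- iota 0 (size t) | nth false m r] = [:: i; j; k; l].
  by rewrite -(eqP size_m') filter_iota_nth (eqP size_m').
exists (Tuple size_m'); rewrite /= filter_m mask_iota_nth -I_eq /= order_iso2413.
have k_lt : k < size t by lia.
have [box10 box21 box22] := (mu_boxesE t_uniq t_pos ijk k_lt kil).2 (conj box1 box2).
rewrite sort2413 /=; try lia.
by apply/and5P; split; try lia; apply/box_freeP.
Qed.

(** * Occurrences of 231 through an inserted letter *)

Definition has231 (w : seq nat) := exists a b c,
  [/\ a \in w, b \in w, c \in w &
      [&& index a w < index b w, index b w < index c w, c < a & a < b]].

Section Insert231.

Variables (O R : seq nat) (x : nat).
Hypothesis OxR_uniq : uniq (O ++ x :: R).

Definition x_last231 := exists a b,
  [/\ a \in O, b \in O, index a O < index b O & x < a < b].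
Definition x_middle231 := exists a c, [/\ a \in O, c \in R & c < a < x].
Definition x_first231 := exists b c,
  [/\ b \in R, c \in R, index b R < index c R & c < x < b].

Let uniq_parts : [/\ x \notin O, x \notin R & forall y, y \in R -> y \notin O].
Proof.
move: OxR_uniq; rewrite cat_uniq /= => /and4P [_ /norP [x_O /hasPn O_R] x_R _].
by split => // y /O_R.
Qed.

Let index_O s y : y \in O -> index y (O ++ s) = index y O.
Proof. by rewrite index_cat => ->. Qed.

Let index_R s y : y \in R -> index y (O ++ s) = size O + index y s.
Proof. by case: uniq_parts => _ _ O_R /O_R y_O; rewrite index_cat (negbTE y_O). Qed.

Let index_ins_R y : y \in R -> index y (O ++ x :: R) = size O + (index y R).+1.
Proof.
case: uniq_parts => _ x_R _ y_R; rewrite index_R //= ifN //.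
by apply: contraNneq x_R => ->.
Qed.

Let index_ins y : y \in O ++ x :: R ->
  [\/ y \in O /\ index y (O ++ x :: R) = index y O,
      y = x /\ index y (O ++ x :: R) = size O |
      y \in R /\ index y (O ++ x :: R) = size O + (index y R).+1].
Proof.
case: uniq_parts => x_O x_R _.
rewrite mem_cat inE => /or3P [y_O | /eqP -> | y_R].
- by constructor 1; rewrite index_O.
- by constructor 2; rewrite index_cat (negbTE x_O) /= eqxx addn0.
- by constructor 3; rewrite index_ins_R.
Qed.

Let has231_OR a b c : a \in O ++ R -> b \in O ++ R -> c \in O ++ R ->
  index a (O ++ R) < index b (O ++ R) < index c (O ++ R) -> c < a < b ->
  has231 (O ++ R).
Proof. by move=> *; exists a, b, c; split => //; lia. Qed.

Lemma has231_insert_cases : has231 (O ++ x :: R) ->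
  [\/ has231 (O ++ R), x_last231, x_middle231 | x_first231].
Proof.
move=> [a [b [c [a_in b_in c_in /and4P [ab bc ca a_b]]]]].
have index_O_lt y : y \in O -> index y O < size O by rewrite index_mem.
case: (index_ins a_in) => [[a_O ia]|[a_x ia]|[a_R ia]];
case: (index_ins b_in) => [[b_O ib]|[b_x ib]|[b_R ib]];
case: (index_ins c_in) => [[c_O ic]|[c_x ic]|[c_R ic]];
rewrite ?ia ?ib ?ic in ab bc; try subst a; try subst b; try subst c;
try (have := index_O_lt a a_O); try (have := index_O_lt b b_O);
try (have := index_O_lt c c_O); move=> *; try (exfalso; lia).
- by constructor 1; apply: (has231_OR (a := a) (b := b) (c := c));
    rewrite ?mem_cat ?a_O ?b_O ?c_O ?index_O //; lia.
- by constructor 2; exists a, b; rewrite ca a_b.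
- by constructor 1; apply: (has231_OR (a := a) (b := b) (c := c));
    rewrite ?mem_cat ?a_O ?b_O ?c_R ?orbT ?(index_O _ a_O) ?(index_O _ b_O) ?index_R //; lia.
- by constructor 3; exists a, c; rewrite ca a_b.
- by constructor 1; apply: (has231_OR (a := a) (b := b) (c := c));
    rewrite ?mem_cat ?a_O ?b_R ?c_R ?orbT ?(index_O _ a_O) ?(index_R _ b_R) ?index_R //; lia.
- by constructor 4; exists b, c; split => //; lia.
- by constructor 1; apply: (has231_OR (a := a) (b := b) (c := c));
    rewrite ?mem_cat ?a_R ?b_R ?c_R ?orbT ?(index_R _ a_R) ?(index_R _ b_R) ?index_R //; lia.
Qed.

Let index_ins_OR y : y \in O ++ R ->
  index y (O ++ x :: R) = index y (O ++ R) + (size O <= index y (O ++ R)).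
Proof.
rewrite mem_cat => /orP [y_O | y_R].
  by rewrite !index_O // leqNgt index_mem y_O addn0.
by rewrite index_ins_R // index_R // leq_addr addn1 addnS.
Qed.

Lemma has231_insert : [\/ has231 (O ++ R), x_last231, x_middle231 | x_first231] ->
  has231 (O ++ x :: R).
Proof.
have mem_ins y : y \in O ++ R -> y \in O ++ x :: R.
  by rewrite !mem_cat inE => /orP [] ->; rewrite ?orbT.
have in_O y : y \in O -> y \in O ++ x :: R by rewrite mem_cat => ->.
have in_R y : y \in R -> y \in O ++ x :: R by rewrite mem_cat inE => ->; rewrite !orbT.
have x_in : x \in O ++ x :: R by rewrite mem_cat inE eqxx orbT.
have index_x : index x (O ++ x :: R) = size O.
  by case: (index_ins x_in) => [[x_O]|[]|[x_R]] //; case: uniq_parts; rewrite ?x_O ?x_R.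
have index_O_lt y : y \in O -> index y O < size O by rewrite index_mem.
case=> [[a [b [c [a_in b_in c_in /and4P [ab bc ca a_b]]]]]|
        [a [b [a_O b_O ab /andP [xa a_b]]]]|
        [a [c [a_O c_R /andP [ca ax]]]]|
        [b [c [b_R c_R bc /andP [cx xb]]]]].
- exists a, b, c; rewrite !mem_ins // !index_ins_OR //; split => //; lia.
- exists a, b, x; split; [exact: in_O | exact: in_O | exact: x_in |].
  by rewrite index_x !index_O //; have := index_O_lt b b_O; lia.
- exists a, x, c; split; [exact: in_O | exact: x_in | exact: in_R |].
  by rewrite index_x index_O // index_ins_R //; have := index_O_lt a a_O; lia.
- exists x, b, c; split; [exact: x_in | exact: in_R | exact: in_R |].
  by rewrite index_x !index_ins_R //; lia.
Qed.

End Insert231.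

Lemma has231_rcons u x : uniq (rcons u x) ->
  has231 (rcons u x) <-> has231 u \/ x_last231 u x.
Proof.
rewrite -cats1 => ux_uniq; split.
  by case/(has231_insert_cases ux_uniq); rewrite ?cats0; auto => -[? [c []]].
case=> [u231 | x231]; apply: has231_insert => //.
  by constructor 1; rewrite cats0.
by constructor 2.
Qed.

Lemma sc_loop_foldl avoid (t stk out : seq nat) :
  sc_loop avoid t stk out =
  let p := foldl (fun p x => sc_insert avoid x p.1 p.2) (stk, out) t in p.2 ++ p.1.
Proof. by elim: t stk out => [|x t IH] stk out //=; rewrite IH; case: sc_insert. Qed.

Lemma SC_foldl avoid step (t : seq nat) : uniq t ->
  (forall u x, uniq (rcons u x) ->
     let p := foldl step ([::], [::]) u in sc_insert avoid x p.1 p.2 = step p x) ->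
  SC avoid t = let p := foldl step ([::], [::]) t in p.2 ++ p.1.
Proof.
move=> t_uniq step_ok; rewrite /SC sc_loop_foldl.
suff -> : foldl (fun p x => sc_insert avoid x p.1 p.2) ([::], [::]) t =
          foldl step ([::], [::]) t by [].
elim/last_ind: t t_uniq => [|u x IH] // ux_uniq; rewrite !foldl_rcons IH; first exact: step_ok.
by move: ux_uniq; rewrite rcons_uniq => /andP [].
Qed.

Definition west_step (p : seq nat * seq nat) x : seq nat * seq nat :=
  let k := find (fun y => x <= y) p.1 in (x :: drop k p.1, p.2 ++ take k p.1).

Definition west_state (u : seq nat) := foldl west_step ([::], [::]) u.

Lemma west_insert x stk out : pairwise leq stk ->
  sc_insert (fun s => ~~ contains_cl [:: 2; 1] s) x stk out = west_step (stk, out) x.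
Proof.
elim: stk out => [|y s IH] out; first by rewrite /west_step /= cats0.
move=> stk_sorted; have /andP [/allP y_le s_sorted] := stk_sorted.
rewrite /= avoid21E pairwise_cons stk_sorted andbT /west_step /=.
case: leqP => [x_y | y_x] /=.
  by rewrite ifT ?cats0 //; apply/allP => z /y_le; apply: leq_trans.
by rewrite IH // /west_step cat_rcons.
Qed.

Definition sc23_step (p : seq nat * seq nat) x : seq nat * seq nat :=
  if all (fun y => x < y) p.1 then (x :: p.1, p.2)
  else let k := find (fun y => y <= x) p.1 in (x :: drop k p.1, p.2 ++ take k p.1).

Definition sc23_state (u : seq nat) := foldl sc23_step ([::], [::]) u.

(* On a 23_1-free stack, pushing x creates an occurrence exactly when x is below the top and
   some deeper entry is below x. *)
Lemma sc23_insert x stk out : ~~ contains_23_1 stk -> x \notin stk ->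
  sc_insert (fun s => ~~ contains_23_1 s) x stk out = sc23_step (stk, out) x.
Proof.
elim: stk out => [|y s IH] out //= stk_avoid.
rewrite inE negb_or => /andP [x_neq_y x_s].
have s_avoid : ~~ contains_23_1 s.
  by move: stk_avoid; rewrite contains_23_1_cons negb_or => /andP [].
rewrite contains_23_1_cons (negbTE stk_avoid) /= /sc23_step /=.
case: (ltngtP x y) => [x_y | y_x | x_eq_y]; last by rewrite x_eq_y eqxx in x_neq_y.
- case s_below: (has (fun z => z < x) s) => /=.
    have s_not_above : all (fun z => x < z) s = false.
      by apply/negbTE/allPn; case/hasP: s_below => z z_s z_x; exists z; rewrite // -leqNgt ltnW.
    by rewrite IH // /sc23_step /= s_not_above cat_rcons.
  rewrite ifT //; apply/allP => z z_s; move/hasPn: s_below => /(_ z z_s).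
  by rewrite -leqNgt leq_eqVlt => /orP [/eqP x_z | //]; rewrite x_z z_s in x_s.
- by rewrite /= cats0.
Qed.

(** * West's stack-sorting map *)

Definition later_larger (u : seq nat) y :=
  exists z, [/\ z \in u, index y u < index z u & y < z].

Lemma later_larger_rcons (u : seq nat) x y : x \notin u -> y \in u ->
  later_larger (rcons u x) y <-> later_larger u y \/ y < x.
Proof.
move=> x_u y_u; split.
- move=> [z [+ yz y_z]]; rewrite mem_rcons inE => /orP [/eqP z_x | z_u].
    by right; rewrite -z_x.
  by left; exists z; rewrite -(index_rcons x y_u) -(index_rcons x z_u).
- case=> [[z [z_u yz y_z]] | y_x].
    by exists z; rewrite mem_rcons inE z_u orbT !index_rcons.
  exists x; rewrite mem_rcons mem_head index_rcons // index_rcons_last //.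
  by rewrite index_mem.
Qed.

Lemma later_larger_last (u : seq nat) x : x \notin u -> ~ later_larger (rcons u x) x.
Proof.
move=> x_u [z [z_in + _]]; rewrite index_rcons_last // ltnNge.
by rewrite -ltnS -(size_rcons u x) index_mem z_in.
Qed.

Definition west_inv (u : seq nat) (p : seq nat * seq nat) :=
  [/\ perm_eq (p.2 ++ p.1) u, {in u, forall y, y \in p.2 <-> later_larger u y}
    & pairwise leq p.1].

Lemma west_state_inv u : uniq u -> west_inv u (west_state u).
Proof.
elim/last_ind: u => [|u x IH]; first by split => // y.
rewrite rcons_uniq => /andP [x_u u_uniq].
rewrite /west_state foldl_rcons -/(west_state u).
case: (west_state u) (IH u_uniq) => stk out [perm_u out_ll stk_sorted] /=.
set k := find (fun y => x <= y) stk.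
have take_lt : {in take k stk, forall y, y < x}.
  apply/allP; move: (all_take_find (fun y => x <= y) stk); rewrite -/k.
  by apply: sub_all => y; rewrite ltnNge.
have drop_ge : {in drop k stk, forall y, x <= y}.
  by apply/allP/(all_drop_find (r := leq)) => // y z; apply: leq_trans.
have x_out_stk : x \notin out ++ stk by rewrite (perm_mem perm_u).
split => /=.
- exact: perm_pop_push.
- move=> y; rewrite mem_rcons inE => /orP [/eqP -> | y_u].
    split=> [|/(later_larger_last x_u)] //.
    rewrite mem_cat => /orP [x_out | /mem_take x_stk]; move: x_out_stk.
      by rewrite mem_cat x_out.
    by rewrite mem_cat x_stk orbT.
  rewrite later_larger_rcons // -out_ll // mem_cat.
  split=> [/orP [-> | /take_lt] | [-> // | y_x]]; [by left | by right |].
  have : y \in out ++ stk by rewrite (perm_mem perm_u).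
  rewrite mem_cat -{1}(cat_take_drop k stk) mem_cat => /or3P [-> | -> | /drop_ge] //; lia.
- rewrite (subseq_pairwise (drop_subseq _ _) stk_sorted) andbT.
  by apply/allP.
Qed.

Lemma west_out_below u stk out x : west_inv u (stk, out) -> x \notin u ->
  all (fun y => y < x) out <-> ~ x_last231 u x.
Proof.
move=> [perm_u out_ll _] x_u; have out_u y : y \in out -> y \in u.
  by move=> y_out; rewrite -(perm_mem perm_u) mem_cat y_out.
split=> [/allP out_lt [a [b [a_u b_u ab /andP [xa a_b]]]] | no231].
  have /out_lt : a \in out by apply/out_ll => //; exists b.
  by rewrite ltnNge ltnW.
apply/allP => a a_out; have [b [b_u ab a_b]] := (out_ll a (out_u a a_out)).1 a_out.
rewrite ltnNge leq_eqVlt negb_or; apply/andP; split.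
  by apply: contraNneq x_u => ->; exact: out_u.
by apply/negP => xa; apply: no231; exists a, b; rewrite out_u // xa.
Qed.

Lemma west_sortedP u : uniq u ->
  pairwise ltn ((west_state u).2 ++ (west_state u).1) <-> ~ has231 u.
Proof.
elim/last_ind: u => [|u x IH] u_uniq.
  by split=> // _ [a [b [c []]]].
have inv := west_state_inv u_uniq; move: u_uniq.
rewrite rcons_uniq => /andP [x_u u_uniq]; rewrite has231_rcons ?rcons_uniq ?x_u //.
have inv_u := west_state_inv u_uniq; move: inv_u (IH u_uniq) inv.
rewrite /west_state foldl_rcons -/(west_state u).
case: (west_state u) => stk out inv_u IH_u [_ _ /=].
set k := find (fun y => x <= y) stk => /andP [/allP drop_ge _].
have x_out_stk : x \notin out ++ stk by case: inv_u => perm_u _ _; rewrite (perm_mem perm_u).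
rewrite pairwise_insert -catA cat_take_drop all_cat.
have -> : all (fun y => y < x) (take k stk).
  by move: (all_take_find (fun y => x <= y) stk); apply: sub_all => y; rewrite ltnNge.
have -> : all (ltn x) (drop k stk).
  apply/allP => y y_drop; rewrite /= ltn_neqAle drop_ge // andbT.
  by apply: contraNneq x_out_stk => ->; rewrite mem_cat (mem_drop y_drop) orbT.
have out_below := west_out_below inv_u x_u.
rewrite !andbT; split=> [/andP [/IH_u no_u /out_below no_x] [] // | no231].
by apply/andP; split; [apply/IH_u | apply/out_below] => H; apply: no231; [left | right].
Qed.

Lemma west_sE w : uniq w -> west_s w = (west_state w).2 ++ (west_state w).1.
Proof.
move=> w_uniq; apply: SC_foldl => // u x; rewrite rcons_uniq => /andP [_ u_uniq].
by apply: west_insert; case: (west_state_inv u_uniq).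
Qed.

Definition lr_min (u : seq nat) q := forall r, r < q -> u`_q < u`_r.
Definition rl_min (u : seq nat) p := forall r, p < r < size u -> u`_p < u`_r.
Definition next_smaller (u : seq nat) p q :=
  [/\ p < q, q < size u, u`_q < u`_p & forall r, p < r < q -> u`_p < u`_r].
Definition popped (u : seq nat) p := exists2 q, next_smaller u p q & ~ lr_min u q.

Lemma lr_min_rcons u x q : q < size u -> lr_min (rcons u x) q <-> lr_min u q.
Proof.
move=> q_lt; split=> q_min r rq; have r_lt : r < size u by lia.
- by rewrite -(nth_rcons_lt x q_lt) -(nth_rcons_lt x r_lt); apply: q_min.
- by rewrite (nth_rcons_lt x q_lt) (nth_rcons_lt x r_lt); apply: q_min.
Qed.

Lemma rl_min_rcons u x p : p < size u ->
  rl_min (rcons u x) p <-> rl_min u p /\ u`_p < x.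
Proof.
move=> p_lt; rewrite /rl_min size_rcons; split=> [p_min | [p_min p_x] r].
  split=> [r r_in | ].
    by rewrite -(nth_rcons_lt x p_lt) -(nth_rcons_lt x (_ : r < size u)) ?p_min //; lia.
  by rewrite -(nth_rcons_size u x) -(nth_rcons_lt x p_lt); apply: p_min; lia.
move=> /andP [pr]; rewrite ltnS leq_eqVlt => /orP [/eqP -> | r_lt].
  by rewrite nth_rcons_size nth_rcons_lt.
by rewrite !nth_rcons_lt // p_min ?pr.
Qed.

Lemma rl_min_last u x : rl_min (rcons u x) (size u).
Proof. by move=> r; rewrite size_rcons; lia. Qed.

Lemma next_smaller_rcons u x p q : q < size u ->
  next_smaller (rcons u x) p q <-> next_smaller u p q.
Proof.
move=> q_lt; have p_lt : p < q -> p < size u by move=> pq; lia.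
rewrite /next_smaller size_rcons; split=> -[pq _ qp p_min]; have p_lt' := p_lt pq.
  split=> //; first by rewrite -(nth_rcons_lt x q_lt) -(nth_rcons_lt x p_lt').
  move=> r r_in; have r_lt : r < size u by lia.
  by rewrite -(nth_rcons_lt x p_lt') -(nth_rcons_lt x r_lt) p_min.
split=> //; first by rewrite ltnS ltnW.
  by rewrite !nth_rcons_lt.
move=> r r_in; rewrite !nth_rcons_lt ?p_min //; lia.
Qed.

Lemma popped_rcons u x p : p < size u ->
  popped (rcons u x) p <->
  popped u p \/ [/\ rl_min u p, x < u`_p & ~ lr_min (rcons u x) (size u)].
Proof.
move=> p_lt; split.
- move=> [q q_next q_not_min]; have [pq + qp p_min] := q_next.
  rewrite size_rcons ltnS leq_eqVlt => /orP [/eqP q_eq | q_lt].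
    subst q; right; split=> //.
    + move=> r r_in; have r_lt : r < size u by lia.
      by rewrite -(nth_rcons_lt x p_lt) -(nth_rcons_lt x r_lt) p_min //; lia.
    + by rewrite -(nth_rcons_size u x) -(nth_rcons_lt x p_lt).
  left; exists q; first exact/(next_smaller_rcons x).
    by apply: contra_not q_not_min => /(lr_min_rcons x q_lt).
- case=> [[q q_next q_not_min] | [p_min x_p x_not_min]].
    have q_lt : q < size u by case: q_next.
    exists q; first exact/next_smaller_rcons.
    by apply: contra_not q_not_min => /lr_min_rcons; apply.
  exists (size u) => //; split; rewrite ?size_rcons ?nth_rcons_size ?nth_rcons_lt //.
  move=> r r_in; rewrite !nth_rcons_lt ?p_min //; lia.
Qed.

Lemma popped_last u x : ~ popped (rcons u x) (size u).
Proof. by move=> [q [uq]]; rewrite size_rcons; lia. Qed.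

Lemma next_smaller_exists (u : seq nat) p q : uniq u -> p < q -> q < size u ->
  u`_q < u`_p -> exists2 q', next_smaller u p q' & q' <= q.
Proof.
move=> u_uniq pq q_lt qp.
have ex_q : exists n, [&& p < n, n < size u & u`_n < u`_p] by exists q; rewrite pq q_lt qp.
case: (ex_minnP ex_q) => m /and3P [pm m_lt mp] m_min.
exists m; last by apply: m_min; rewrite pq q_lt qp.
split=> // r /andP [pr rm]; apply: nth_ltn_uniq => //; try lia.
by apply/negP => rp; have := m_min r; rewrite pr rp /=; lia.
Qed.

Lemma next_smaller_uniq (u : seq nat) p q q' :
  next_smaller u p q -> next_smaller u p q' -> q = q'.
Proof.
move=> [pq _ qp p_min] [pq' _ qp' p_min']; case: (ltngtP q q') => // qq'.
- by have := p_min' q; rewrite pq qq' => /(_ isT); lia.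
- by have := p_min q'; rewrite pq' qq' => /(_ isT); lia.
Qed.

Lemma lr_minP (u : seq nat) q :
  reflect (lr_min u q) (all (fun r => u`_q < u`_r) (iota 0 q)).
Proof.
apply: (iffP allP) => q_min r; last by rewrite mem_iota => /andP [_]; apply: q_min.
by move=> rq; apply: q_min; rewrite mem_iota.
Qed.

Lemma not_lr_min (u : seq nat) q : ~ lr_min u q -> exists2 r, r < q & u`_r <= u`_q.
Proof.
move=> /lr_minP /allPn [r]; rewrite mem_iota -leqNgt => /andP [_ rq] rq'.
by exists r.
Qed.

Lemma not_rl_min (u : seq nat) p : uniq u -> p < size u -> ~ rl_min u p ->
  exists r, [/\ p < r, r < size u & u`_r < u`_p].
Proof.
move=> u_uniq p_lt p_not_min.
have /allPn [r] : ~~ all (fun r => u`_p < u`_r) (iota p.+1 (size u - p.+1)).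
  apply/negP => /allP p_min; apply: p_not_min => r r_in; apply: p_min.
  by rewrite mem_iota; lia.
rewrite mem_iota => r_in /= rp; exists r; split; try lia.
by apply: nth_ltn_uniq => //; lia.
Qed.

Lemma lr_min_below (u : seq nat) i : exists m, [/\ m <= i, lr_min u m & u`_m <= u`_i].
Proof.
elim: i {-2}i (leqnn i) => [|n IH] i i_le.
  have -> : i = 0 by lia.
  by exists 0; split => // r; rewrite ltn0.
have [i_min | /not_lr_min [r ri ri']] := lr_minP u i; first by exists i.
have [m [mr m_min m_le]] := IH r ltac:(lia).
by exists m; split => //; lia.
Qed.

Lemma lr_min_not_popped (u : seq nat) m : lr_min u m -> ~ popped u m.
Proof.
move=> m_min [q [mq _ qm m_lt] q_not_min]; apply: q_not_min => r rq.
case: (ltngtP r m) => [rm | mr | ->] //.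
- by have := m_min r rm; lia.
- by have := m_lt r; rewrite mr rq => /(_ isT); lia.
Qed.

Definition last1324 (u : seq nat) x := exists i j k,
  [/\ i < j < k, k < size u & [&& u`_i < u`_k, u`_k < u`_j & u`_j < x]].

Definition last_mu (u : seq nat) x := exists i j k,
  [/\ i < j < k, k < size u & mu_occ u x i j k].

Lemma mu_occ_rcons u x v i j k : i < j < k -> k < size u ->
  mu_occ (rcons u x) v i j k <-> mu_occ u v i j k.
Proof.
move=> ijk k_lt.
have nth_k r : r <= k -> (rcons u x)`_r = u`_r by move=> r_le; rewrite nth_rcons_lt //; lia.
rewrite /mu_occ !nth_k //; try lia.
split=> -[kiv vj box1 box2]; split=> // r r_in.
- by have := box1 r r_in; rewrite nth_k //; lia.
- by have := box2 r r_in; rewrite nth_k //; lia.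
- by rewrite nth_k //; [apply: box1 | lia].
- by rewrite nth_k //; [apply: box2 | lia].
Qed.

Lemma has1324_rcons u x : has1324 (rcons u x) <-> has1324 u \/ last1324 u x.
Proof.
split=> [[i [j [k [l [ijk]]]]] | [[i [j [k [l [ijk kl vals]]]]] | [i [j [k [ijk k_lt vals]]]]]].
- rewrite size_rcons => /andP [kl]; rewrite ltnS leq_eqVlt.
  case/orP => [/eqP l_eq | l_lt]; [subst l |];
    rewrite ?nth_rcons_size !nth_rcons_lt //; try lia.
    by move=> vals; right; exists i, j, k; split => //; lia.
  by move=> vals; left; exists i, j, k, l; split => //; lia.
- by exists i, j, k, l; rewrite size_rcons !nth_rcons_lt //; try lia; split => //; lia.
- exists i, j, k, (size u); rewrite size_rcons nth_rcons_size !nth_rcons_lt //; try lia.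
  by split => //; lia.
Qed.

Lemma has_mu_rcons u x : has_mu (rcons u x) <-> has_mu u \/ last_mu u x.
Proof.
split=> [[i [j [k [l [ijk]]]]] | [[i [j [k [l [ijk kl occ]]]]] | [i [j [k [ijk k_lt occ]]]]]].
- rewrite size_rcons => /andP [kl]; rewrite ltnS leq_eqVlt.
  case/orP => [/eqP l_eq | l_lt]; [subst l |]; rewrite ?nth_rcons_size ?nth_rcons_lt //;
    move/mu_occ_rcons => occ; have {}occ := occ ijk ltac:(lia).
    by right; exists i, j, k.
  by left; exists i, j, k, l; split => //; lia.
- exists i, j, k, l; rewrite size_rcons nth_rcons_lt; last by lia.
  by split; [| lia | apply/mu_occ_rcons => //; lia].
- exists i, j, k, (size u); rewrite size_rcons nth_rcons_size.
  by split; [| lia | apply/mu_occ_rcons].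
Qed.

Definition popped_below (u : seq nat) x := exists p, [/\ p < size u, popped u p & u`_p < x].

Definition buried_above (u : seq nat) x := exists j m,
  [/\ m < j < size u, ~ popped u j, ~ rl_min u j, lr_min u m & u`_m < x < u`_j].

Section Patterns.

Variables (u : seq nat) (x : nat).
Hypothesis u_uniq : uniq u.

Let smaller_before q : q < size u -> ~ lr_min u q -> exists2 r, r < q & u`_r < u`_q.
Proof.
move=> q_lt /not_lr_min [r rq rq']; exists r => //.
by apply: nth_ltn_uniq => //; lia.
Qed.

Lemma popped_below_last1324 : popped_below u x -> last1324 u x.
Proof.
move=> [p [p_lt [q [pq q_lt qp p_min] q_not_min] px]].
have [r rq r_lt] := smaller_before q_lt q_not_min.
have rp : r < p.
  case: (ltngtP r p) => // [pr | r_eq]; last by move: r_lt; rewrite r_eq; lia.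
  by have := p_min r; rewrite pr rq => /(_ isT); lia.
by exists r, p, q; split => //; lia.
Qed.

Lemma last1324_popped_below : last1324 u x -> ~ has_mu u -> popped_below u x.
Proof.
move=> [i [j [k [ijk k_lt vals]]]] no_mu.
have [jk kj] : j < k /\ u`_k < u`_j by split; lia.
have [q [jq q_lt qj j_min] qk] := next_smaller_exists u_uniq jk k_lt kj.
have [q_min | q_not_min] := lr_minP u q.
  have qi : u`_q < u`_i by apply: q_min; lia.
  have q_ne_k : q != k by apply/eqP => q_eq; move: qi; rewrite q_eq; lia.
  case: no_mu; exists i, j, q, k; split; try lia.
  split; try lia.
    by move=> r /andP [_ rj]; have := q_min r ltac:(lia); lia.
  by move=> r /andP [jr rq]; have := j_min r; rewrite jr rq => /(_ isT); lia.
by exists j; split; try lia; exists q.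
Qed.

Lemma last_mu_unpopped pc p : pc < p -> p < size u -> ~ popped u p -> ~ rl_min u p ->
  u`_pc < x < u`_p -> last_mu u x.
Proof.
move=> pcp p_lt p_not_popped p_not_min vals.
have [r [pr r_lt rp]] := not_rl_min u_uniq p_lt p_not_min.
have [q [pq q_lt qp p_min] _] := next_smaller_exists u_uniq pr r_lt rp.
have q_min : lr_min u q.
  have [// | q_not_min] := lr_minP u q.
  by case: p_not_popped; exists q; first split.
exists pc, p, q; split; try lia; split.
- by have := q_min pc ltac:(lia); lia.
- by lia.
- by move=> r' /andP [_ r'p]; have := q_min r' ltac:(lia); lia.
- by move=> r' /andP [pr' r'q]; have := p_min r'; rewrite pr' r'q => /(_ isT); lia.
Qed.

Lemma last_mu_descend i j k q : i < j < k -> k < size u -> x \notin u ->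
  mu_occ u x i j k -> next_smaller u j q -> q <= k -> ~ lr_min u q ->
  last1324 u x \/ (q < k /\ mu_occ u x i q k).
Proof.
move=> ijk k_lt x_u [kix xj box1 box2] [jq q_lt qj j_min] qk q_not_min.
have [r rq rq'] := smaller_before q_lt q_not_min.
have [q_below | q_above] := leqP u`_q u`_k.
  have ri : r < i.
    case: (ltngtP r i) => [// | ir | r_eq]; last by move: rq'; rewrite r_eq; lia.
    case: (ltngtP r j) => [rj | jr | r_eq]; last by move: rq'; rewrite r_eq; lia.
      by have := box1 r; rewrite ir rj => /(_ isT); lia.
    by have := j_min r; rewrite jr rq => /(_ isT); lia.
  by left; exists r, i, k; split; lia.
have q_ne_k : q != k by apply/eqP => q_eq; move: q_above; rewrite q_eq; lia.
have xq : x < u`_q.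
  have := box2 q; rewrite jq /= ltn_neqAle q_ne_k qk => /(_ isT).
  have : u`_q != x by apply: contraNneq x_u => <-; exact: mem_nth.
  lia.
right; split; first lia.
split; try lia.
- move=> r' /andP [ir' r'q]; case: (ltngtP r' j) => [r'j | jr' | ->]; try lia.
    by apply: box1; rewrite ir'.
  by have := j_min r'; rewrite jr' r'q => /(_ isT); lia.
- by move=> r' /andP [qr' r'k]; apply: box2; lia.
Qed.

Lemma last_mu_cases : x \notin u -> last_mu u x -> ~ has_mu u ->
  popped_below u x \/ buried_above u x.
Proof.
move=> x_u [i [j [k [ijk k_lt occ]]]] no_mu.
move: {2}(k - j) (leqnn (k - j)) => n.
elim: n j ijk occ => [|n IH] j ijk occ kj_le; first by lia.
have [kix xj box1 box2] := occ.
have [jk kj] : j < k /\ u`_k < u`_j by split; lia.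
have [q q_next qk] := next_smaller_exists u_uniq jk k_lt kj.
have [jq q_lt qj _] := q_next.
have [q_min | q_not_min] := lr_minP u q.
- have [m [mi m_min m_le]] := lr_min_below u i.
  right; exists j, m; split; try lia.
  + by move=> [q' q'_next]; rewrite -(next_smaller_uniq q_next q'_next).
  + by move=> j_min; have := j_min q; rewrite jq q_lt => /(_ isT); lia.
  + exact: m_min.
- case: (last_mu_descend ijk k_lt x_u occ q_next qk q_not_min) => [last | [qk' occ']].
    by left; apply: last1324_popped_below.
  by apply: (IH q) => //; lia.
Qed.
End Patterns.

(* O ++ x :: R is output ++ stack just after x is read, and O ++ R the same sequence before. *)
Lemma has231_step (u : seq nat) x O R : uniq u -> x \notin u -> uniq (O ++ x :: R) ->
  (has231 (O ++ R) <-> has1324 u \/ has_mu u) ->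
  (x_last231 O x -> has231 (O ++ R)) ->
  (x_middle231 O R x -> last1324 u x) ->
  (x_first231 R x -> last_mu u x) ->
  (popped_below u x -> x_middle231 O R x) ->
  (buried_above u x -> x_first231 R x) ->
  has231 (O ++ x :: R) <-> has1324 (rcons u x) \/ has_mu (rcons u x).
Proof.
move=> u_uniq x_u OxR_uniq IH last231 middle231 first231 middle_of first_of.
rewrite has1324_rcons has_mu_rcons; split.
  by case/(has231_insert_cases OxR_uniq) => [/IH | /last231 /IH | /middle231 | /first231]; tauto.
move=> pats; apply: has231_insert => //.
have [mu_u | no_mu] := classic (has_mu u); first by constructor 1; apply/IH; right.
case: pats => [[u1324 | /(last1324_popped_below u_uniq) last] | [// | mu_last]].
- by constructor 1; apply/IH; left.
- by constructor 3; apply/middle_of/last.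
- case: (last_mu_cases u_uniq x_u mu_last no_mu) => [below | buried].
    by constructor 3; apply: middle_of.
  by constructor 4; apply: first_of.
Qed.

(** * The stack of SC_23_1 *)

Definition stack_shape (u stk : seq nat) := exists P l rest,
  [/\ stk = P ++ l :: rest, l \in u, {in u, forall y, l <= y}, pairwise gtn P &
      forall i, i < size u -> u`_i \in P <-> rl_min u i /\ u`_i <> l].

Record sc23_inv (u stk out : seq nat) : Prop := Sc23Inv {
  sc23_perm : perm_eq (out ++ stk) u;
  sc23_out : forall i, i < size u -> u`_i \in out <-> popped u i;
  sc23_order : pairwise (fun a b => index b u < index a u) stk;
  sc23_avoid : ~~ contains_23_1 stk;
  sc23_shape : u != [::] -> stack_shape u stk }.

Section Sc23Step.

Variables (u out P rest : seq nat) (l x : nat).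
Let stk := P ++ l :: rest.
Hypotheses (u_uniq : uniq u) (x_u : x \notin u) (inv : sc23_inv u stk out).
Hypotheses (l_u : l \in u) (l_min : {in u, forall y, l <= y}) (P_decr : pairwise gtn P)
  (P_rl_min : forall i, i < size u -> u`_i \in P <-> rl_min u i /\ u`_i <> l).

Let perm_u := sc23_perm inv.
Let out_popped := sc23_out inv.

Let out_u y : y \in out -> y \in u.
Proof. by move=> y_out; rewrite -(perm_mem perm_u) mem_cat y_out. Qed.

Let stk_u y : y \in stk -> y \in u.
Proof. by move=> y_stk; rewrite -(perm_mem perm_u) mem_cat y_stk orbT. Qed.

Let out_stk_uniq : uniq (out ++ stk).
Proof. by rewrite (perm_uniq perm_u). Qed.

Let stk_notin_out y : y \in stk -> y \notin out.
Proof.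
by move=> y_stk; move: out_stk_uniq; rewrite cat_uniq => /and3P [_ /hasPn /(_ y y_stk)].
Qed.

Let l_stk : l \in stk.
Proof. by rewrite mem_cat mem_head orbT. Qed.

Let nth_u i : i < size u -> u`_i \in u.
Proof. exact: mem_nth. Qed.

Let nth_ne_x i : i < size u -> u`_i != x.
Proof. by move=> i_lt; apply: contraNneq x_u => <-; exact: nth_u. Qed.

Let x_out_stk : x \notin out ++ stk.
Proof. by rewrite (perm_mem perm_u). Qed.

Let order_rcons s : {subset s <= u} ->
  pairwise (fun a b => index b (rcons u x) < index a (rcons u x)) (x :: s) =
  pairwise (fun a b => index b u < index a u) s.
Proof.
move=> s_u; have s_in : all (mem u) s by apply/allP.
rewrite pairwise_cons (@eq_in_pairwise _ (mem u) _ (fun a b => index b u < index a u)) //.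
  rewrite andb_idl // => _; apply/allP => y /s_u y_u /=.
  by rewrite index_rcons // index_rcons_last // index_mem.
by move=> a b a_u b_u; rewrite !index_rcons.
Qed.

Section NewMinimum.

Hypothesis x_l : x < l.

Let x_below y : y \in u -> x < y.
Proof. by move=> /l_min; apply: leq_trans. Qed.

Lemma sc23_step_min : sc23_step (stk, out) x = (x :: stk, out).
Proof. by rewrite /sc23_step ifT //; apply/allP => y /stk_u /x_below. Qed.

Lemma sc23_inv_min : sc23_inv (rcons u x) (x :: stk) out.
Proof.
split.
- by have := perm_pop_push x 0 perm_u; rewrite take0 drop0 cats0.
- move=> i; rewrite size_rcons ltnS leq_eqVlt => /orP [/eqP -> | i_lt].
    rewrite nth_rcons_size; split=> [x_out | /popped_last //].
    by move: x_out_stk; rewrite mem_cat x_out.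
  rewrite nth_rcons_lt // popped_rcons // -out_popped //; split=> [-> | [// | [_ _ []]]].
    by left.
  by move=> r r_lt; rewrite nth_rcons_size nth_rcons_lt ?x_below ?nth_u.
- by rewrite order_rcons ?(sc23_order inv) //; exact: stk_u.
- rewrite contains_23_1_cons negb_or (sc23_avoid inv) /= negb_and orbC.
  by apply/orP; left; apply/hasPn => y /mem_behead /stk_u /x_below xy; rewrite -leqNgt ltnW.
- move=> _; exists [::], x, stk; split => //.
  + by rewrite mem_rcons mem_head.
  + by move=> y; rewrite mem_rcons inE => /orP [/eqP -> // | /x_below /ltnW].
  + move=> i; rewrite size_rcons ltnS leq_eqVlt => /orP [/eqP -> | i_lt].
      by rewrite nth_rcons_size; split=> // -[].
    rewrite nth_rcons_lt // rl_min_rcons //; split=> // -[[_ i_x] _].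
    by have := x_below (nth_u i_lt); lia.
Qed.

Let index_out_stk y : y \in out -> index y (out ++ stk) < index l (out ++ stk).
Proof.
move=> y_out; rewrite !index_cat y_out (negbTE (stk_notin_out l_stk)).
by apply: leq_trans (leq_addr _ _); rewrite index_mem.
Qed.

Lemma has231_min : (has231 (out ++ stk) <-> has1324 u \/ has_mu u) ->
  has231 (out ++ x :: stk) <-> has1324 (rcons u x) \/ has_mu (rcons u x).
Proof.
move=> IH; apply: (@has231_step u x out stk) => //.
- have := perm_pop_push x 0 perm_u; rewrite take0 drop0 cats0 => /perm_uniq ->.
  by rewrite rcons_uniq x_u.
- move=> [a [b [a_out b_out ab /andP [xa a_b]]]].
  have l_a : l != a by apply: contraNneq (stk_notin_out l_stk) => ->.
  exists a, b, l; split; [by rewrite mem_cat a_out | by rewrite mem_cat b_out |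
    by rewrite mem_cat l_stk orbT |].
  by rewrite index_out_stk // !index_cat a_out b_out ab a_b ltn_neqAle l_a l_min ?out_u.
- by move=> [a [c [/out_u /x_below a_x _ /andP [_ ax]]]]; lia.
- by move=> [b [c [_ /stk_u /x_below c_x _ /andP [cx _]]]]; lia.
- by move=> [p [/nth_u /x_below p_x _ px]]; lia.
- by move=> [j [m [mj _ _ _ /andP [mx _]]]]; have := x_below (nth_u (_ : m < size u)); lia.
Qed.

End NewMinimum.

Section NonMinimum.

Hypothesis l_x : l < x.

Let k := find (fun y => y <= x) P.

Let P_u y : y \in P -> y \in u.
Proof. by move=> y_P; apply: stk_u; rewrite mem_cat y_P. Qed.

Let take_above y : y \in take k P -> x < y.
Proof.
by move=> y_take; have /allP/(_ y y_take) := all_take_find (fun y => y <= x) P; rewrite ltnNge.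
Qed.

Let drop_below y : y \in drop k P -> y < x.
Proof.
move=> y_drop; have /allP/(_ y y_drop) : all (fun y => y <= x) (drop k P).
  by apply: (all_drop_find (r := gtn)) => // a b a_x /= ba; apply: leq_trans a_x; apply: ltnW.
rewrite leq_eqVlt => /orP [/eqP y_x | //].
by move: x_u; rewrite -y_x (P_u (mem_drop y_drop)).
Qed.

Let stk_split : take k stk = take k P /\ drop k stk = drop k P ++ l :: rest.
Proof. by rewrite takel_cat ?drop_cat_le // find_size. Qed.

Lemma sc23_step_nonmin :
  sc23_step (stk, out) x = (x :: drop k P ++ l :: rest, out ++ take k P).
Proof.
rewrite /sc23_step ifF; last by apply/negbTE/allPn; exists l; rewrite // -leqNgt ltnW.
by rewrite /= find_cat_hit ?(ltnW l_x) // -/k; case: stk_split => -> ->.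
Qed.
Let x_not_min : ~ lr_min (rcons u x) (size u).
Proof.
move=> x_min; have := x_min (index l u); rewrite index_mem l_u nth_rcons_size.
by rewrite nth_rcons_lt ?index_mem // nth_index // => /(_ isT); lia.
Qed.

Let in_P_take i : i < size u -> u`_i \in P -> x < u`_i -> u`_i \in take k P.
Proof.
move=> i_lt; rewrite -{1}(cat_take_drop k P) mem_cat => /orP [// | /drop_below]; lia.
Qed.

Lemma sc23_out_nonmin i : i < size (rcons u x) ->
  (rcons u x)`_i \in out ++ take k P <-> popped (rcons u x) i.
Proof.
rewrite size_rcons ltnS leq_eqVlt => /orP [/eqP -> | i_lt].
  rewrite nth_rcons_size; split=> [x_in | /popped_last //].
  move: x_out_stk; rewrite mem_cat; move: x_in; rewrite mem_cat => /orP [-> // | /mem_take x_P].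
  by rewrite mem_cat x_P orbT.
rewrite nth_rcons_lt // popped_rcons // mem_cat -out_popped //.
split=> [/orP [-> | i_take] | [-> // | [i_min x_i _]]]; first by left.
  have /(P_rl_min i_lt) [i_min _] := mem_take i_take.
  by right; split => //; apply: take_above.
apply/orP; right; apply: in_P_take => //; apply/P_rl_min => //; split => //.
by move=> i_l; move: x_i; rewrite i_l; lia.
Qed.

Lemma stack_shape_nonmin : stack_shape (rcons u x) (x :: drop k P ++ l :: rest).
Proof.
exists (x :: drop k P), l, rest; split => //.
- by rewrite mem_rcons inE l_u orbT.
- by move=> y; rewrite mem_rcons inE => /orP [/eqP -> | /l_min]; [apply: ltnW |].
- rewrite /= (subseq_pairwise (drop_subseq _ _) P_decr) andbT.
  by apply/allP => y /drop_below.
move=> i; rewrite size_rcons ltnS leq_eqVlt => /orP [/eqP -> | i_lt].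
  rewrite nth_rcons_size mem_head; split => // _; split; first exact: rl_min_last.
  by move=> x_l; move: l_x; rewrite x_l ltnn.
rewrite nth_rcons_lt // rl_min_rcons // inE (negbTE (nth_ne_x i_lt)) /=.
split=> [i_drop | [[i_min i_x] i_l]].
  by have /(P_rl_min i_lt) [] := mem_drop i_drop; split => //; split => //; apply: drop_below.
have : u`_i \in P by apply/P_rl_min.
rewrite -{1}(cat_take_drop k P) mem_cat => /orP [/take_above | //]; lia.
Qed.

Lemma sc23_inv_nonmin : sc23_inv (rcons u x) (x :: drop k P ++ l :: rest) (out ++ take k P).
Proof.
case: stk_split => take_stk drop_stk.
split.
- by rewrite -take_stk -drop_stk; exact: perm_pop_push.
- exact: sc23_out_nonmin.
- rewrite order_rcons -drop_stk ?(subseq_pairwise (drop_subseq _ _) (sc23_order inv)) //.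
  by move=> y /mem_drop /stk_u.
- rewrite contains_23_1_cons negb_or -drop_stk contains_23_1_drop ?(sc23_avoid inv) //=.
  have stk_hit : has (fun y => y <= x) stk by apply/hasP; exists l => //; apply: ltnW.
  have := nth_find 0 stk_hit.
  rewrite (find_cat_hit (a := fun y => y <= x) P rest (ltnW l_x)) -/k => x_head.
  by rewrite -nth0 nth_drop addn0 ltnNge x_head.
- by move=> _; exact: stack_shape_nonmin.
Qed.

Let O := out ++ take k P.
Let R := drop k P ++ l :: rest.

Let OR_eq : O ++ R = out ++ stk.
Proof.
by case: stk_split => take_stk drop_stk; rewrite /O /R -catA -take_stk -drop_stk cat_take_drop.
Qed.

Let l_R : l \in R.
Proof. by rewrite mem_cat mem_head orbT. Qed.

Let stk_uniq : uniq stk.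
Proof. by move: out_stk_uniq; rewrite cat_uniq => /and3P []. Qed.

Let R_stk y : y \in R -> y \in stk.
Proof. by case: stk_split => _ drop_stk; rewrite /R -drop_stk => /mem_drop. Qed.

Let stack_order a b : a \in stk -> b \in stk -> index a stk < index b stk ->
  index b u < index a u.
Proof.
move=> a_stk b_stk ab; have /(pairwiseP 0) := sc23_order inv.
by move=> /(_ (index a stk) (index b stk)); rewrite !inE !index_mem !nth_index //; apply.
Qed.

Let popped_in_out p : p < size u -> popped u p -> u`_p \in out.
Proof. by move=> p_lt /(out_popped p_lt). Qed.

Let last231_nonmin : x_last231 O x -> has231 (O ++ R).
Proof.
move=> [a [b [a_O b_O ab /andP [xa a_b]]]].
have l_O : l \notin O.
  rewrite mem_cat negb_or (stk_notin_out l_stk) /=.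
  by apply/negP => /take_above; rewrite ltnNge (ltnW l_x).
exists a, b, l; split; [by rewrite mem_cat a_O | by rewrite mem_cat b_O |
  by rewrite mem_cat l_R orbT |].
rewrite (index_cat a O R) (index_cat b O R) (index_cat l O R) a_O b_O (negbTE l_O) ab /=.
by rewrite ltn_addr ?index_mem // (ltn_trans l_x xa) a_b.
Qed.

Let middle231_nonmin : x_middle231 O R x -> last1324 u x.
Proof.
move=> [a [c [a_O _ /andP [_ ax]]]].
have a_out : a \in out.
  by move: a_O; rewrite mem_cat => /orP [// | /take_above]; rewrite ltnNge (ltnW ax).
have a_u := out_u a_out; apply: popped_below_last1324 => //.
exists (index a u); rewrite index_mem nth_index //; split => //.
by apply/out_popped; rewrite ?index_mem ?nth_index.
Qed.

Let first231_nonmin : x_first231 R x -> last_mu u x.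
Proof.
move=> [b [c [b_R c_R bc /andP [cx xb]]]].
have [b_stk c_stk] := (R_stk b_R, R_stk c_R).
have [b_u c_u] := (stk_u b_stk, stk_u c_stk).
have b_rest : b \notin P.
  move: b_R; rewrite mem_cat inE => /or3P [/drop_below bx | /eqP b_l | b_rest].
  - by move: xb; rewrite ltnNge (ltnW bx).
  - by move: xb; rewrite b_l ltnNge (ltnW l_x).
  - move: stk_uniq; rewrite cat_uniq => /and3P [_ /hasPn /(_ b) + _].
    by rewrite inE b_rest orbT => /(_ isT).
have [idx_b idx_c] := (index_mem b u, index_mem c u); rewrite b_u c_u in idx_b idx_c.
apply: (last_mu_unpopped u_uniq (pc := index c u) (p := index b u)); rewrite ?nth_index //.
- apply: stack_order => //; move: bc; case: stk_split => _ drop_stk.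
  by rewrite /R -drop_stk index_drop_ltn // drop_stk.
- by move/(out_popped idx_b); rewrite nth_index //; apply/negP; exact: stk_notin_out.
- move=> b_min; move: b_rest; rewrite (_ : b \in P) //.
  have := (P_rl_min idx_b).2; rewrite nth_index //; apply; split => // b_l.
  by move: xb; rewrite b_l ltnNge (ltnW l_x).
- by rewrite cx xb.
Qed.

Let popped_below_nonmin : popped_below u x -> x_middle231 O R x.
Proof.
move=> [p [p_lt p_popped px]]; have p_out := popped_in_out p_lt p_popped.
have l_p : l != u`_p by apply: contraNneq (stk_notin_out l_stk) => ->.
exists u`_p, l; split; [by rewrite mem_cat p_out | exact: l_R |].
by rewrite px andbT ltn_neqAle l_p l_min ?nth_u.
Qed.

Let buried_above_nonmin : buried_above u x -> x_first231 R x.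
Proof.
move=> [j [m [/andP [mj j_lt] j_not_popped j_not_min m_min /andP [mx xj]]]].
have m_lt : m < size u by apply: ltn_trans mj j_lt.
have in_stk i : i < size u -> ~ popped u i -> u`_i \in stk.
  move=> i_lt i_not_popped; have : u`_i \in out ++ stk by rewrite (perm_mem perm_u) nth_u.
  by rewrite mem_cat => /orP [/(out_popped i_lt) // | //].
have [j_stk m_stk] := (in_stk j j_lt j_not_popped, in_stk m m_lt (lr_min_not_popped m_min)).
have in_R i : u`_i \in stk -> u`_i \notin take k P -> u`_i \in R.
  case: stk_split => take_stk drop_stk; rewrite /R -drop_stk -take_stk.
  by rewrite -{1}(cat_take_drop k stk) mem_cat => /orP [-> | ->].
have j_R : u`_j \in R by apply: in_R => //; apply/negP => /mem_take /(P_rl_min j_lt) [].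
have m_R : u`_m \in R by apply: in_R => //; apply/negP => /take_above; rewrite ltnNge (ltnW mx).
exists u`_j, u`_m; split; rewrite ?mx ?xj //.
case: stk_split => _ drop_stk; rewrite /R -drop_stk index_drop_ltn ?drop_stk //.
case: (ltngtP (index u`_j stk) (index u`_m stk)) => // [mj' | jm'].
  by have := stack_order m_stk j_stk mj'; rewrite !index_uniq // ltnNge (ltnW mj).
have := congr1 (nth 0 stk) jm'; rewrite !nth_index // => /eqP.
by rewrite nth_uniq // => /eqP jm0; move: mj; rewrite jm0 ltnn.
Qed.

Lemma has231_nonmin : (has231 (out ++ stk) <-> has1324 u \/ has_mu u) ->
  has231 (O ++ x :: R) <-> has1324 (rcons u x) \/ has_mu (rcons u x).
Proof.
have OxR_uniq : uniq (O ++ x :: R).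
  have := perm_pop_push x k perm_u; case: stk_split => -> -> /perm_uniq ->.
  by rewrite rcons_uniq x_u.
move=> IH; apply: (has231_step u_uniq x_u OxR_uniq _ last231_nonmin middle231_nonmin
  first231_nonmin popped_below_nonmin buried_above_nonmin).
by rewrite OR_eq.
Qed.

End NonMinimum.

End Sc23Step.

Lemma sc23_inv_single x : sc23_inv [:: x] [:: x] [::].
Proof.
split=> //.
- by case=> // _; split=> // -[q [q_pos q_lt _ _] _]; move: q_lt; rewrite /=; lia.
- move=> _; exists [::], x, [::]; split => //; first by rewrite mem_head.
    by move=> y; rewrite inE => /eqP ->.
  by case=> // _; split=> // -[].
Qed.

Lemma sc23_state_spec u : uniq u ->
  sc23_inv u (sc23_state u).1 (sc23_state u).2 /\
  (has231 ((sc23_state u).2 ++ (sc23_state u).1) <-> has1324 u \/ has_mu u).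
Proof.
elim/last_ind: u => [_ | u x IH].
  split; first by split => // i; rewrite ltn0.
  split; first by case=> a [b [c []]].
  by case=> -[i [j [k [l [_ /andP [_ +]]]]]]; rewrite ltn0.
rewrite rcons_uniq => /andP [x_u u_uniq].
rewrite /sc23_state foldl_rcons -/(sc23_state u).
case: (sc23_state u) (IH u_uniq) => stk out /= [inv IH_u].
have [u_nil | u_nonempty] := eqVneq u [::].
  subst u; have /perm_nilP := sc23_perm inv; case: out stk {inv IH_u} => [|? ?] [|? ?] // _.
  rewrite /sc23_step /=; split; first exact: sc23_inv_single.
  split=> [[a [b [c [a_in b_in _ /and4P [ab _ _ _]]]]] | ].
    by move: a_in b_in ab; rewrite !inE => /eqP -> /eqP ->; rewrite ltnn.
  by case=> -[i [j [k [l [/andP [ij jk] /andP [kl]]]]]] /= l_lt _; lia.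
have [P [l [rest [stk_eq l_u l_min P_decr P_rl_min]]]] := sc23_shape inv u_nonempty.
subst stk; case: (ltngtP x l) => [x_l | l_x | x_l].
- rewrite (sc23_step_min inv l_min x_l); split; first exact: sc23_inv_min.
  exact: has231_min.
- rewrite (sc23_step_nonmin out P rest l_x); split; first exact: sc23_inv_nonmin.
  exact: has231_nonmin.
- by move: x_u; rewrite x_l l_u.
Qed.

Lemma SC_23_1E t : uniq t -> SC_23_1 t = (sc23_state t).2 ++ (sc23_state t).1.
Proof.
move=> t_uniq; apply: SC_foldl => // u x; rewrite rcons_uniq => /andP [x_u u_uniq].
have [inv _] := sc23_state_spec u_uniq.
apply: sc23_insert; first exact: sc23_avoid inv.
by apply: contra x_u => x_stk; rewrite -(perm_mem (sc23_perm inv)) mem_cat x_stk orbT.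
Qed.

Lemma perm_iota_eqE (s : seq nat) m n :
  perm_eq s (iota m n) -> s = iota m n <-> pairwise ltn s.
Proof.
move=> s_perm; rewrite -(sorted_pairwise ltn_trans); split=> [-> | s_sorted].
  exact: iota_ltn_sorted.
apply: (irr_sorted_eq ltn_trans ltnn) => //; first exact: iota_ltn_sorted.
exact: perm_mem.
Qed.

Lemma perm_SC_23_1 t : uniq t -> perm_eq (SC_23_1 t) t.
Proof. by move=> t_uniq; rewrite SC_23_1E //; case: (sc23_state_spec t_uniq) => -[]. Qed.

Lemma SC_23_1_231 t : uniq t -> has231 (SC_23_1 t) <-> has1324 t \/ has_mu t.
Proof. by move=> t_uniq; rewrite SC_23_1E //; case: (sc23_state_spec t_uniq). Qed.

Lemma perm_west_s w : uniq w -> perm_eq (west_s w) w.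
Proof. by move=> w_uniq; rewrite west_sE //; case: (west_state_inv w_uniq). Qed.

Lemma west_s_sortedP w : uniq w -> pairwise ltn (west_s w) <-> ~ has231 w.
Proof. by move=> w_uniq; rewrite west_sE // west_sortedP. Qed.

Theorem mainTheorem9 (n : nat) (t : seq nat) :
  0 < n -> is_perm n t ->
  (west_s (SC_23_1 t) = iota 1 n <->
   (~~ contains_cl [:: 1; 3; 2; 4] t /\ ~~ contains_mesh mu2413.1 mu2413.2 t)).
Proof.
move=> _ t_perm.
have t_uniq : uniq t by rewrite (perm_uniq t_perm) iota_uniq.
have t_pos : 0 \notin t by rewrite (perm_mem t_perm) mem_iota.
have w_uniq : uniq (SC_23_1 t) by rewrite (perm_uniq (perm_SC_23_1 t_uniq)).
have s_perm : perm_eq (west_s (SC_23_1 t)) (iota 1 n).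
  by rewrite (perm_trans (perm_west_s w_uniq)) ?(perm_trans (perm_SC_23_1 t_uniq)).
rewrite perm_iota_eqE // west_s_sortedP // SC_23_1_231 //.
split=> [no_pat | [/contains1324P no1324 /(contains_muP t_uniq t_pos) no_mu]]; last tauto.
by split; apply/negP; [move/contains1324P | move/(contains_muP t_uniq t_pos)]; tauto.
Qed.
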